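(* Let $t^*$ maximize $u(t)$ over all tests $t\subseteq[n]$ with $|t|\le G$. Then for every $B\ge1$ and every testing regime $T\in\mathcal T^B$ (overlapping allowed), $u(T)\le B\cdot u(t^* )$.
   Context: Population $[n]$; individual $i$ is healthy with probability $q_i\in[0,1]$, independently, with utility $u_i\ge0$. For $S\subseteq[n]$, $q_S=\prod_{i\in S}q_i$. A test is a set $t\subseteq[n]$ with $|t|\le G$, negative iff all members are healthy; $u(t)=q_t\sum_{i\in t}u_i$. A testing regime is a tuple $T=(t_1,\dots,t_B)$ of tests; $\mathcal T^B$ is the set of all of them. Welfare $u(T)=\sum_iu_iP^T_i$, where $P^T_i$ is the probability that $i$ is in at least one negative test of $T$. *)

From mathcomp Require Import all_boot all_order all_algebra.
Set Implicit Arguments. Unset Strict Implicit. Unset Printing Implicit Defensive.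
Import Order.TTheory GRing.Theory Num.Theory.
Local Open Scope ring_scope.

Section GroupTesting.
Variables (R : realFieldType) (n : nat).
(* q i = probability that individual i is healthy; u i = utility of i *)
Variables (q u : 'I_n -> R).

Definition qS (S : {set 'I_n}) : R := \prod_(i in S) q i.

Definition test_util (t : {set 'I_n}) : R := qS t * \sum_(i in t) u i.

(* Health outcomes: w i = true iff individual i is healthy.
   Independent product distribution. *)
Definition outcome_prob (w : {ffun 'I_n -> bool}) : R :=
  \prod_i (if w i then q i else 1 - q i).

Definition negative (w : {ffun 'I_n -> bool}) (t : {set 'I_n}) : bool :=
  [forall j in t, w j].

Definition P_in_neg (B : nat) (T : B.-tuple {set 'I_n}) (i : 'I_n) : R :=
  \sum_(w : {ffun 'I_n -> bool})
     (if [exists k : 'I_B, (i \in tnth T k) && negative w (tnth T k)]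
      then outcome_prob w else 0).

Definition welfare (B : nat) (T : B.-tuple {set 'I_n}) : R :=
  \sum_i u i * P_in_neg T i.

End GroupTesting.

From mathcomp Require Import all_boot all_order all_algebra.
Set Implicit Arguments. Unset Strict Implicit. Unset Printing Implicit Defensive.
Import Order.TTheory GRing.Theory Num.Theory.
Local Open Scope ring_scope.

(* The argument is a union bound.  First, the probability that a test t is
   negative is exactly q_t: summing the product distribution over outcomes in
   which every member of t is healthy factors coordinatewise.  Second, the
   probability that i lies in at least one negative test of T is at most the
   sum, over the tests of T containing i, of their probabilities of being
   negative.  Weighting by u_i >= 0 and exchanging the sums shows that the
   welfare of T is at most the sum of the single-test utilities u(t_k); each
   of these is at most the optimal single-test utility, giving the bound B
   times that optimum. *)

Lemma indicator_exists_le (R : numDomainType) (I : finType) (P : pred I)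
    (a : R) : 0 <= a ->
  (if [exists k, P k] then a else 0) <= \sum_k (if P k then a else 0).
Proof.
move=> a_ge0; have terms_ge0 k : 0 <= (if P k then a else 0) by case: ifP.
case: existsP => [[k Pk]|_]; last exact: sumr_ge0.
by rewrite (bigD1 k) //= Pk lerDl sumr_ge0.
Qed.

Section GroupTestingBounds.
Variables (R : realFieldType) (n : nat) (q u : 'I_n -> R).

Lemma outcome_prob_ge0 (hq : forall i, 0 <= q i <= 1)
    (w : {ffun 'I_n -> bool}) : 0 <= outcome_prob q w.
Proof.
apply: prodr_ge0 => i _; have /andP[q_ge0 q_le1] := hq i.
by case: (w i); rewrite ?subr_ge0.
Qed.

(* A test t is negative with probability q_t: the restricted outcome weight
   is a product of coordinate factors, one of which vanishes on unhealthy
   members of t, and the sum of products then factors by distributivity. *)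
Lemma prob_negative (t : {set 'I_n}) :
  \sum_(w : {ffun 'I_n -> bool}) (if negative w t then outcome_prob q w else 0)
  = qS q t.
Proof.
pose F (i : 'I_n) (b : bool) : R :=
  if b then q i else if i \in t then 0 else 1 - q i.
have factor w : (if negative w t then outcome_prob q w else 0)
                = \prod_i F i (w i).
  rewrite /negative /outcome_prob /F; case: forallP => [all_healthy|].
    apply: eq_bigr => i _; case wi: (w i) => //.
    by case it: (i \in t) => //; move: (all_healthy i); rewrite it wi.
  move/forallP; rewrite negb_forall_in => /existsP[j /andP[jt /negbTE wj]].
  by rewrite (bigD1 j) //= wj jt mul0r.
rewrite (eq_bigr _ (fun w _ => factor w)) -(bigA_distr_bigA F).
rewrite /qS [RHS]big_mkcond; apply: eq_bigr => i _.
rewrite big_bool /F /=; case: (i \in t); first by rewrite addr0.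
by rewrite addrC subrK.
Qed.

Lemma P_in_neg_le (hq : forall i, 0 <= q i <= 1) (B : nat)
    (T : B.-tuple {set 'I_n}) (i : 'I_n) :
  P_in_neg q T i <= \sum_(k < B) (if i \in tnth T k then qS q (tnth T k) else 0).
Proof.
rewrite /P_in_neg; apply: le_trans (_ : _ <= \sum_w \sum_(k < B)
  (if (i \in tnth T k) && negative w (tnth T k) then outcome_prob q w else 0)) _.
  apply: ler_sum => w _; apply: indicator_exists_le; exact: outcome_prob_ge0.
rewrite exchange_big; apply: ler_sum => k _.
by case: (i \in tnth T k); rewrite ?prob_negative ?big1.
Qed.

(* The welfare of a regime is at most the sum of the utilities of its tests:
   an individual covered by several negative tests is counted once on the
   left but once per covering test on the right. *)
Lemma welfare_le_sum_test_util (hq : forall i, 0 <= q i <= 1)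
    (hu : forall i, 0 <= u i) (B : nat) (T : B.-tuple {set 'I_n}) :
  welfare q u T <= \sum_(k < B) test_util q u (tnth T k).
Proof.
apply: le_trans (_ : _ <= \sum_i u i *
  \sum_(k < B) (if i \in tnth T k then qS q (tnth T k) else 0)) _.
  by apply: ler_sum => i _; rewrite ler_wpM2l ?P_in_neg_le.
under eq_bigr => i _ do rewrite mulr_sumr.
rewrite exchange_big; apply: ler_sum => k _.
rewrite /test_util mulr_sumr [leRHS]big_mkcond; apply: ler_sum => i _.
by case: ifP; rewrite ?mulr0 // mulrC.
Qed.

End GroupTestingBounds.

Theorem mainTheorem9 (R : realFieldType) (n G : nat) (q u : 'I_n -> R)
  (hq : forall i, 0 <= q i <= 1) (hu : forall i, 0 <= u i)
  (tstar : {set 'I_n}) (htstar : (#|tstar| <= G)%N)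
  (hmax : forall t : {set 'I_n}, (#|t| <= G)%N -> test_util q u t <= test_util q u tstar)
  (B : nat) (hB : (1 <= B)%N) (T : B.-tuple {set 'I_n})
  (hT : forall k : 'I_B, (#|tnth T k| <= G)%N) :
  welfare q u T <= B%:R * test_util q u tstar.
Proof.
apply: le_trans (welfare_le_sum_test_util hq hu T) _.
have -> : B%:R * test_util q u tstar = \sum_(k < B) test_util q u tstar.
  by rewrite sumr_const card_ord mulr_natl.
by apply: ler_sum => k _; exact: hmax.
Qed.
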